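(* In the setting below with $P=\mathfrak A$ and the absolute error criterion, suppose $\{S_d\}$ is polynomially tractable with constants $C,p>0$, $q\ge0$. Then: (i) for every polynomial $\mathcal P$ with $\mathcal P(d)>0$ for $d\in\mathbb N$, $\lambda_{d,\psi(1)}\,\mathcal P(d)\to0$ as $d\to\infty$ (i.e. $\epsilon_d^{\rm init}$ tends to zero faster than the inverse of any polynomial); (ii) $\lambda\in\ell_\tau$ for every $\tau>p/2$, and for every such $\tau$ and every $\delta>0$ there exists $d_0\in\mathbb N$ with $$\ln\big(\|\lambda\|_{\ell_\tau}^\tau\big)-\delta\le\frac1d\sum_{k=1}^{a_d}\ln\Big(\frac{\|\lambda\|_{\ell_\tau}^\tau}{\lambda_k^\tau}\Big)\quad\text{for all }d\ge d_0;$$ (iii) consequently $\lambda_1<1$ or $\lim_{d\to\infty}a_d=\infty$.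
   Context: Setting: $S_1:H_1\to G_1$ is a compact linear operator between real Hilbert spaces ($H_1$ infinite-dimensional separable); $\lambda=(\lambda_m)_{m\in\mathbb N}$, $\lambda_1\ge\lambda_2\ge\dots\ge0$, are the eigenvalues of $S_1^\dagger S_1$. $S_d=S_1^{\otimes d}:H_1^{\otimes d}\to G_1^{\otimes d}$. For each $d$ fix $\emptyset\ne I_d=\{i_1<\dots<i_{a_d}\}\subset\{1,\dots,d\}$ ($I_1=\{1\}$), put $a_d=\#I_d$, $b_d=d-a_d$, and fix one type $P\in\{\mathfrak S,\mathfrak A\}$ for all $d$; the problem $\{S_d\}$ is the family of restrictions of $S_d$ to the $I_d$-symmetric subspace (if $P=\mathfrak S$) or $I_d$-antisymmetric subspace (if $P=\mathfrak A$) of $H_1^{\otimes d}$, i.e. the range of $\frac1{a_d!}\sum_{\pi}(\pm1)U_\pi$, the sum over permutations $\pi$ of $\{1,\dots,d\}$ fixing all points outside $I_d$, $U_\pi(f_1\otimes\cdots\otimes f_d)=f_{\pi(1)}\otimes\cdots\otimes f_{\pi(d)}$, sign $(-1)^{|\pi|}$ used for $\mathfrak A$. Let $\nabla_d=\{k\in\mathbb N^d:k_{i_1}\le\dots\le k_{i_{a_d}}\}$ for $P=\mathfrak S$ and with strict inequalities for $P=\mathfrak A$; $\lambda_{d,k}=\prod_{l=1}^d\lambda_{k_l}$; $\psi:\mathbb N\to\nabla_d$ a bijection with $\lambda_{d,\psi(1)}\ge\lambda_{d,\psi(2)}\ge\cdots$. These are exactly the eigenvalues of $S_d^\dagger S_d$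 on the subspace, and the information complexity (absolute error) is $n(\epsilon,d)=\#\{k\in\nabla_d:\lambda_{d,k}>\epsilon^2\}$, the initial error $\epsilon^{\rm init}_d=\sqrt{\lambda_{d,\psi(1)}}$ (equal to $\lambda_1^{d/2}$ if $P=\mathfrak S$, and $\sqrt{\lambda_1^{b_d}\lambda_1\lambda_2\cdots\lambda_{a_d}}$ if $P=\mathfrak A$). Polynomially tractable: $\exists C,p>0,q\ge0$ with $n(\epsilon,d)\le C\epsilon^{-p}d^q$ for all $d\in\mathbb N,\epsilon\in(0,1]$; strongly polynomially tractable: this with $q=0$. Standing assumptions: $\lambda_2>0$ and $\epsilon_d^{\rm init}>0$ for all $d$. $\ell_\tau$: sequences with $\|\lambda\|_{\ell_\tau}^\tau=\sum_m\lambda_m^\tau<\infty$. *)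

From Stdlib Require Import Reals Lra List Sorted Arith.
Import ListNotations.
Open Scope R_scope.

(* Convention: the eigenvalue sequence lambda_1 >= lambda_2 >= ... of the paper
   is represented 0-based: lam i = lambda_{i+1}.  Multi-indices k in N^d are
   lists of length d of 0-based indices; positions 1..d are 0-based too. *)

Definition lam_prod (lam : nat -> R) (k : list nat) : R :=
  fold_right (fun m acc => lam m * acc) 1 k.

(* k in nabla_d for P = antisymmetric type, with I = I_d (list of 0-based
   positions, increasing): k_{i_1} < ... < k_{i_{a_d}} strictly. *)
Definition in_nablaA (d : nat) (I : list nat) (k : list nat) : Prop :=
  length k = d /\ Sorted lt (map (fun i => nth i k 0%nat) I).

Definition fsum (n : nat) (f : nat -> R) : R :=
  fold_right Rplus 0 (map f (seq 0 n)).

Definition rpow0 (x tau : R) : R :=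
  if Rle_dec x 0 then 0 else Rpower x tau.

(* evaluation of a real polynomial given by its coefficient list c_0, c_1, ... *)
Definition poly_eval (c : list R) (x : R) : R :=
  fold_right (fun a acc => a + x * acc) 0 c.

Definition valid_index_sets (I : nat -> list nat) : Prop :=
  I 1%nat = [0%nat] /\
  forall d : nat, (1 <= d)%nat ->
    I d <> [] /\ Sorted lt (I d) /\ (forall i, In i (I d) -> (i < d)%nat).

(* Eigenvalue sequence of S_1^dagger S_1 with S_1 compact, H_1 infinite-dim:
   nonnegative, nonincreasing, tending to zero. *)
Definition eigen_seq (lam : nat -> R) : Prop :=
  (forall m, 0 <= lam m) /\ (forall m, lam (S m) <= lam m) /\ Un_cv lam 0.

(* n(eps,d) <= B : every finite duplicate-free family of indices in nabla_d
   with lambda_{d,k} > eps^2 has at most B elements. *)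
Definition info_complexity_le (lam : nat -> R) (I : nat -> list nat)
  (eps : R) (d : nat) (B : R) : Prop :=
  forall ks : list (list nat), NoDup ks ->
    (forall k, In k ks -> in_nablaA d (I d) k /\ lam_prod lam k > eps ^ 2) ->
    INR (length ks) <= B.

Definition poly_tractable_with (lam : nat -> R) (I : nat -> list nat)
  (C p q : R) : Prop :=
  0 < C /\ 0 < p /\ 0 <= q /\
  forall (d : nat) (eps : R), (1 <= d)%nat -> 0 < eps <= 1 ->
    info_complexity_le lam I eps d (C * Rpower eps (- p) * Rpower (INR d) q).

Definition is_largest_eig (lam : nat -> R) (I : nat -> list nat) (d : nat)
  (mu : R) : Prop :=
  (exists k0, in_nablaA d (I d) k0 /\ lam_prod lam k0 = mu) /\
  (forall k, in_nablaA d (I d) k -> lam_prod lam k <= mu).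

From Stdlib Require Import Reals Lra List Sorted Arith.
From Stdlib Require Import Lia.
Import ListNotations.
Open Scope R_scope.

(* Write lambda_1 >= lambda_2 >= ... (here [lam 0], [lam 1], ...), a = a_d, b = d - a_d.
   1. The largest eigenvalue of the d-th problem is
        top_eig d = lambda_1^b * lambda_1 ... lambda_a                  [top_eig_largest].
   2. Tractability bounds the number of eigenvalues above any level, hence the j-th
      largest one by (C d^q / j)^(2/p); summing, for tau > p/2 the tau-th powers over any
      finite family in nabla_d add up to at most a constant times
      (1 + top_eig^tau) d^(2 tau q / p)                         [family_power_sum_bound].
   3. At d = 1 this gives lambda in l_tau, with mass L > lambda_1^tau  [eigen_summable].
      Freezing the antisymmetric entries at their smallest admissible values and letting
      the free entries range over N gives frozen_sum = L^b (lambda_1 ... lambda_a)^tau,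
      bounded as in 2.  As top_eig^tau = rho^b frozen_sum with rho = lambda_1^tau / L < 1,
      a self-improving estimate shows that frozen_sum grows polynomially in d
      [frozen_sum_poly].
   4. Part (ii) is the logarithm of 3.  For part (i) take tau = p: either b >= d/2 and
      top_eig^p <= rho^b poly(d), or a > d/2 and lambda_1 ... lambda_a decays faster than
      any geometric sequence, so top_eig^p <= K th^d d^e with th < 1.  Part (iii) follows
      from (i) with the constant polynomial 1: if lambda_1 >= 1 and a_d < M infinitely
      often, top_eig d stays above a positive product of at most M eigenvalues. *)

Definition lsum (l : list R) : R := fold_right Rplus 0 l.
Definition lprod (l : list R) : R := fold_right Rmult 1 l.

Lemma lsum_app l1 l2 : lsum (l1 ++ l2) = lsum l1 + lsum l2.
Proof. unfold lsum; induction l1 as [|x l1 IH]; cbn; [ring|]. rewrite IH; ring. Qed.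

Lemma lprod_app l1 l2 : lprod (l1 ++ l2) = lprod l1 * lprod l2.
Proof. unfold lprod; induction l1 as [|x l1 IH]; cbn; [ring|]. rewrite IH; ring. Qed.

Lemma lam_prod_eq lam k : lam_prod lam k = lprod (map lam k).
Proof. unfold lprod; induction k as [|m k IH]; simpl; auto. now rewrite IH. Qed.

Lemma lprod_nonneg {A} (f : A -> R) l :
  (forall x, In x l -> 0 <= f x) -> 0 <= lprod (map f l).
Proof.
  induction l as [|a l IH]; intros H; cbn; [lra|].
  apply Rmult_le_pos; [apply H; left|apply IH; intros; apply H; right]; auto.
Qed.

Lemma lprod_pos {A} (f : A -> R) l :
  (forall x, In x l -> 0 < f x) -> 0 < lprod (map f l).
Proof.
  induction l as [|a l IH]; intros H; cbn; [lra|].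
  apply Rmult_lt_0_compat; [apply H; left|apply IH; intros; apply H; right]; auto.
Qed.

Lemma lprod_le {A} (f g : A -> R) l :
  (forall x, In x l -> 0 <= f x <= g x) -> lprod (map f l) <= lprod (map g l).
Proof.
  induction l as [|a l IH]; intros H; cbn; [lra|].
  apply Rmult_le_compat.
  - apply H; left; auto.
  - apply (lprod_nonneg f l); intros; apply H; right; auto.
  - apply H; left; auto.
  - apply IH; intros; apply H; right; auto.
Qed.

Lemma lprod_le1 {A} (f : A -> R) l :
  (forall x, In x l -> 0 <= f x <= 1) -> lprod (map f l) <= 1.
Proof.
  induction l as [|a l IH]; intros H; [cbn; lra|].
  change (f a * lprod (map f l) <= 1).
  assert (Ha : 0 <= f a <= 1) by (apply H; left; auto).
  assert (Hl : 0 <= lprod (map f l) <= 1).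
  { split; [apply lprod_nonneg|apply IH]; intros; apply H; right; auto. }
  nra.
Qed.

Lemma lprod_pos_each {A} (f : A -> R) l : (forall x, In x l -> 0 <= f x) ->
  0 < lprod (map f l) -> forall x, In x l -> 0 < f x.
Proof.
  induction l as [|a l IH]; intros H Hp x Hx; [destruct Hx|].
  change (0 < f a * lprod (map f l)) in Hp.
  assert (Ha : 0 <= f a) by (apply H; left; auto).
  assert (Hl : 0 <= lprod (map f l)) by (apply lprod_nonneg; intros; apply H; right; auto).
  destruct Hx as [<-|Hx].
  - destruct (Req_dec (f a) 0) as [E|E]; [rewrite E in Hp|]; lra.
  - apply IH; auto; [intros; apply H; right; auto|].
    destruct (Req_dec (lprod (map f l)) 0) as [E|E]; [rewrite E in Hp|]; lra.
Qed.

Lemma ln_lprod {A} (f : A -> R) l : (forall x, In x l -> 0 < f x) ->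
  ln (lprod (map f l)) = lsum (map (fun x => ln (f x)) l).
Proof.
  induction l as [|a l IH]; intros H; [apply ln_1|].
  change (ln (f a * lprod (map f l)) = ln (f a) + lsum (map (fun x => ln (f x)) l)).
  rewrite ln_mult, IH; auto.
  - intros; apply H; right; auto.
  - apply H; left; auto.
  - apply lprod_pos; intros; apply H; right; auto.
Qed.

Lemma lsum_nonneg {A} (f : A -> R) l :
  (forall x, In x l -> 0 <= f x) -> 0 <= lsum (map f l).
Proof.
  induction l as [|a l IH]; intros H; cbn; [lra|].
  apply Rplus_le_le_0_compat; [apply H; left|apply IH; intros; apply H; right]; auto.
Qed.

Lemma lsum_scal {A} c (f : A -> R) l :
  lsum (map (fun x => c * f x) l) = c * lsum (map f l).
Proof. unfold lsum; induction l as [|a l IH]; cbn; [ring|]. rewrite IH; ring. Qed.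

Lemma lsum_sub_const (c : R) (g : nat -> R) l :
  lsum (map (fun t => c - g t) l) = INR (length l) * c - lsum (map g l).
Proof.
  unfold lsum; induction l as [|a l IH]; [cbn; ring|].
  cbn [map fold_right length]. rewrite IH, S_INR; ring.
Qed.

Lemma lsum_flat {A B} (F : B -> R) (G : A -> list B) L :
  lsum (map F (flat_map G L)) = lsum (map (fun c => lsum (map F (G c))) L).
Proof. induction L; cbn; [reflexivity|]. rewrite map_app, lsum_app, IHL. reflexivity. Qed.

Lemma lsum_seq_sum (f : nat -> R) n : lsum (map f (seq 0 (S n))) = sum_f_R0 f n.
Proof.
  induction n as [|n IH]; [unfold lsum; cbn; ring|].
  rewrite seq_S, map_app, lsum_app, IH. unfold lsum; cbn. ring.
Qed.

Lemma min_exists {A} (f : A -> R) (l : list A) : l <> [] ->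
  exists x, In x l /\ forall y, In y l -> f x <= f y.
Proof.
  induction l as [|a l IH]; intros H; [congruence|].
  destruct l as [|b l'].
  - exists a; split; [left; auto|]. intros y [<-|[]]; lra.
  - destruct IH as [x [Hx Hm]]; [congruence|].
    destruct (Rle_dec (f a) (f x)).
    + exists a; split; [left; auto|]. intros y [<-|Hy]; [lra|]. specialize (Hm y Hy); lra.
    + exists x; split; [right; auto|]. intros y [<-|Hy]; [lra|]. auto.
Qed.

Lemma Rpower_pos x y : 0 < Rpower x y.
Proof. unfold Rpower; apply exp_pos. Qed.

Lemma Rpower_1_base y : Rpower 1 y = 1.
Proof. unfold Rpower. rewrite ln_1, Rmult_0_r, exp_0; auto. Qed.

Lemma Rpower_ge1 x y : 1 <= x -> 0 <= y -> 1 <= Rpower x y.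
Proof. intros. rewrite <- (Rpower_O x) by lra. apply Rle_Rpower; auto. Qed.

Lemma Rpower_div x y s : 0 < x -> 0 < y -> Rpower (x / y) s = Rpower x s * Rpower y (- s).
Proof.
  intros Hx Hy. unfold Rdiv.
  rewrite <- Rpower_mult_distr by (auto; apply Rinv_0_lt_compat; auto).
  unfold Rpower. rewrite ln_Rinv by auto. do 2 f_equal. ring.
Qed.

Lemma rpow0_pos x t : 0 < x -> rpow0 x t = Rpower x t.
Proof. intros; unfold rpow0; destruct (Rle_dec x 0); [lra|auto]. Qed.

Lemma rpow0_0 x t : x <= 0 -> rpow0 x t = 0.
Proof. intros; unfold rpow0; destruct (Rle_dec x 0); [auto|lra]. Qed.

Lemma rpow0_nonneg x t : 0 <= rpow0 x t.
Proof. unfold rpow0; destruct (Rle_dec x 0); [lra|left; apply Rpower_pos]. Qed.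

Lemma rpow0_gt0 x t : 0 < x -> 0 < rpow0 x t.
Proof. intros; rewrite rpow0_pos; auto; apply Rpower_pos. Qed.

Lemma rpow0_1 t : rpow0 1 t = 1.
Proof. rewrite rpow0_pos by lra. apply Rpower_1_base. Qed.

Lemma rpow0_mult x y t : 0 <= x -> 0 <= y -> rpow0 (x * y) t = rpow0 x t * rpow0 y t.
Proof.
  intros Hx Hy.
  destruct (Req_dec x 0). { subst. rewrite Rmult_0_l, !(rpow0_0 0) by lra. ring. }
  destruct (Req_dec y 0). { subst. rewrite Rmult_0_r, !(rpow0_0 0) by lra. ring. }
  rewrite !rpow0_pos by nra. rewrite Rpower_mult_distr; auto; lra.
Qed.

Lemma rpow0_le x y t : 0 <= t -> 0 <= x <= y -> rpow0 x t <= rpow0 y t.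
Proof.
  intros. destruct (Req_dec x 0). { subst; rewrite rpow0_0 by lra; apply rpow0_nonneg. }
  rewrite !rpow0_pos by lra. apply Rle_Rpower_l; lra.
Qed.

Lemma rpow0_lt x y t : 0 < t -> 0 <= x < y -> rpow0 x t < rpow0 y t.
Proof.
  intros. destruct (Req_dec x 0). { subst; rewrite rpow0_0 by lra; apply rpow0_gt0; lra. }
  rewrite !rpow0_pos by lra. apply Rlt_Rpower_l; lra.
Qed.

Lemma rpow0_lprod {A} (f : A -> R) l t : (forall x, In x l -> 0 <= f x) ->
  rpow0 (lprod (map f l)) t = lprod (map (fun x => rpow0 (f x) t) l).
Proof.
  induction l as [|a l IH]; intros H; [apply rpow0_1|].
  change (rpow0 (f a * lprod (map f l)) t = rpow0 (f a) t * lprod (map (fun x => rpow0 (f x) t) l)).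
  rewrite rpow0_mult, IH; auto.
  - intros; apply H; right; auto.
  - apply H; left; auto.
  - apply lprod_nonneg; intros; apply H; right; auto.
Qed.

Lemma rpow0_pow x n t : 0 <= x -> rpow0 (x ^ n) t = rpow0 x t ^ n.
Proof.
  intros Hx; induction n as [|n IH]; [apply rpow0_1|].
  cbn [pow]. rewrite rpow0_mult, IH; auto. apply pow_le; auto.
Qed.

Lemma Un_cv_le u l X : Un_cv u l -> (forall n, u n <= X) -> l <= X.
Proof.
  intros Hc Hb. destruct (Rle_dec l X) as [|Hn]; auto. exfalso.
  destruct (Hc (l - X)) as [N HN]; [lra|]. specialize (HN N (le_n _)). specialize (Hb N).
  unfold R_dist in HN. apply Rabs_def2 in HN. lra.
Qed.

Lemma Un_cv_pow u l b : Un_cv u l -> Un_cv (fun n => u n ^ b) (l ^ b).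
Proof.
  intros H; induction b as [|b IH]; cbn [pow].
  - intros e He; exists 0%nat; intros; unfold R_dist; rewrite Rminus_diag, Rabs_R0; auto.
  - apply CV_mult; auto.
Qed.

Lemma pow_anti x m n : 0 <= x <= 1 -> (m <= n)%nat -> x ^ n <= x ^ m.
Proof.
  intros Hx Hmn. replace n with (m + (n - m))%nat by lia. rewrite pow_add.
  pose proof (pow_le x m (proj1 Hx)). pose proof (pow_le x (n - m) (proj1 Hx)).
  assert (x ^ (n - m) <= 1) by (rewrite <- (pow1 (n - m)); apply pow_incr; lra). nra.
Qed.

Lemma ln_le x y : 0 < x -> x <= y -> ln x <= ln y.
Proof. intros. destruct (Req_dec x y); [subst; lra|]. left; apply ln_increasing; lra. Qed.

Lemma ln_lt_0 x : 0 < x < 1 -> ln x < 0.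
Proof. intros. rewrite <- ln_1. apply ln_increasing; lra. Qed.

Lemma ln_le_sub1 y : 0 < y -> ln y <= y - 1.
Proof. intros. pose proof (exp_ineq1_le (ln y)). rewrite exp_ln in H0; auto; lra. Qed.

Lemma ln_le_2sqrt x : 1 <= x -> ln x <= 2 * sqrt x.
Proof.
  intros. assert (0 < sqrt x) by (apply sqrt_lt_R0; lra).
  replace (ln x) with (2 * ln (sqrt x)).
  - pose proof (ln_le_sub1 (sqrt x) H0). lra.
  - rewrite <- (sqrt_sqrt x) at 2 by lra. rewrite ln_mult; auto; ring.
Qed.

Lemma eventually_sqrt_ge (X : R) : exists N, forall d, (N <= d)%nat -> X <= sqrt (INR d).
Proof.
  destruct (INR_archimed 1 (X * X) ltac:(lra)) as [n Hn]. exists n. intros d Hd.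
  destruct (Rle_dec X 0). { pose proof (sqrt_positivity (INR d) (pos_INR d)); lra. }
  rewrite <- (sqrt_square X) by lra. apply sqrt_le_1; [nra|apply pos_INR|].
  apply le_INR in Hd. lra.
Qed.

Lemma log_sublinear a b c : 0 <= b -> 0 < c ->
  exists N, forall d, (N <= d)%nat -> (1 <= d)%nat -> a + b * ln (INR d) <= c * INR d.
Proof.
  intros Hb Hc. destruct (eventually_sqrt_ge ((Rabs a + 2 * b) / c)) as [N HN].
  exists N; intros d Hd Hd1. specialize (HN d Hd).
  set (x := INR d) in *. assert (Hx : 1 <= x) by (apply (le_INR 1); auto).
  assert (Hs1 : 1 <= sqrt x) by (rewrite <- sqrt_1; apply sqrt_le_1; lra).
  pose proof (ln_le_2sqrt x Hx). pose proof (sqrt_sqrt x ltac:(lra)). pose proof (Rle_abs a).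
  assert (Hk : Rabs a + 2 * b <= c * sqrt x).
  { apply Rmult_le_compat_l with (r := c) in HN; [|lra].
    replace (c * ((Rabs a + 2 * b) / c)) with (Rabs a + 2 * b) in HN by (field; lra). exact HN. }
  assert (b * ln x <= b * (2 * sqrt x)) by (apply Rmult_le_compat_l; auto).
  pose proof (Rabs_pos a). nra.
Qed.

Lemma geom_poly_decay K th e eps : 0 <= K -> 0 < th < 1 -> 0 <= e -> 0 < eps ->
  exists N, forall d, (N <= d)%nat -> (1 <= d)%nat -> K * th ^ d * Rpower (INR d) e < eps.
Proof.
  intros HK Hth He Heps. pose proof (ln_lt_0 th Hth).
  destruct (log_sublinear (ln (K + 1) - ln eps + 1) e (- ln th) He ltac:(lra)) as [N HN].
  exists N; intros d Hd Hd1. specialize (HN d Hd Hd1).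
  assert (Hx : 0 < INR d) by (apply lt_0_INR; lia).
  assert (E : (K + 1) * th ^ d * Rpower (INR d) e
              = exp (ln (K + 1) + INR d * ln th + e * ln (INR d))).
  { rewrite <- Rpower_pow by lra. unfold Rpower. rewrite !exp_plus, exp_ln by lra. ring. }
  assert (Hlt : (K + 1) * th ^ d * Rpower (INR d) e < eps).
  { rewrite E, <- (exp_ln eps) by lra. apply exp_increasing. lra. }
  pose proof (pow_le th d ltac:(lra)). pose proof (Rpower_pos (INR d) e). nra.
Qed.

Lemma poly_eval_bound (c : list R) x : 1 <= x ->
  Rabs (poly_eval c x) <= lsum (map Rabs c) * x ^ length c.
Proof.
  intros Hx. induction c as [|a c IH]; [cbn; rewrite Rabs_R0; unfold lsum; cbn; lra|].
  change (Rabs (a + x * poly_eval c x) <= (Rabs a + lsum (map Rabs c)) * (x * x ^ length c)).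
  eapply Rle_trans; [apply Rabs_triang|]. rewrite Rabs_mult, (Rabs_right x) by lra.
  pose proof (lsum_nonneg Rabs c (fun y _ => Rabs_pos y)).
  assert (1 <= x ^ length c) by (rewrite <- (pow1 (length c)); apply pow_incr; lra).
  assert (x * Rabs (poly_eval c x) <= x * (lsum (map Rabs c) * x ^ length c))
    by (apply Rmult_le_compat_l; lra).
  assert (1 <= x * x ^ length c) by nra.
  pose proof (Rabs_pos a).
  assert (Rabs a <= Rabs a * (x * x ^ length c)) by nra. nra.
Qed.

(** Partial sums of the series [sum_m m^-s] are bounded by [1 + 1/(s-1)] for
    [s > 1]; this is the integral comparison used to sum tractability bounds. *)

Fixpoint zeta_partial (s : R) (n : nat) : R :=
  match n with O => 0 | S m => zeta_partial s m + Rpower (INR (S m)) (- s) end.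

(* One step of the integral comparison: (x+1)^-s <= int_x^(x+1) t^-s dt. *)
Lemma zeta_step s x : 1 < s -> 1 <= x ->
  Rpower (x + 1) (- s) <= (Rpower x (1 - s) - Rpower (x + 1) (1 - s)) / (s - 1).
Proof.
  intros Hs Hx. set (y := x + 1).
  assert (Hy : 0 < y) by (unfold y; lra).
  assert (Hln : ln x - ln y <= - / y).
  { replace (ln x - ln y) with (ln (x / y)).
    - pose proof (ln_le_sub1 (x / y) ltac:(apply Rdiv_lt_0_compat; lra)).
      replace (x / y - 1) with (- / y) in H by (unfold y; field; lra). exact H.
    - unfold Rdiv. rewrite ln_mult, ln_Rinv; auto; try lra. apply Rinv_0_lt_compat; lra. }
  unfold Rpower.
  assert (E1 : exp ((1 - s) * ln x) = exp ((1 - s) * ln y) * exp ((1 - s) * (ln x - ln y))).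
  { rewrite <- exp_plus. f_equal. ring. }
  assert (E2 : exp (- s * ln y) = exp ((1 - s) * ln y) * / y).
  { replace (/ y) with (exp (- ln y)) by (rewrite exp_Ropp, exp_ln; auto).
    rewrite <- exp_plus. f_equal. ring. }
  assert (Hgrow : 1 + (s - 1) / y <= exp ((1 - s) * (ln x - ln y))).
  { eapply Rle_trans; [|apply exp_ineq1_le].
    assert ((s - 1) * / y <= (1 - s) * (ln x - ln y)) by nra. unfold Rdiv; lra. }
  rewrite E1, E2. pose proof (exp_pos ((1 - s) * ln y)) as Hp.
  apply Rmult_le_reg_r with (r := s - 1); [lra|].
  replace ((exp ((1 - s) * ln y) * exp ((1 - s) * (ln x - ln y)) - exp ((1 - s) * ln y))
             / (s - 1) * (s - 1))
    with (exp ((1 - s) * ln y) * (exp ((1 - s) * (ln x - ln y)) - 1)) by (field; lra).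
  replace (exp ((1 - s) * ln y) * / y * (s - 1))
    with (exp ((1 - s) * ln y) * ((s - 1) / y)) by (field; lra).
  apply Rmult_le_compat_l; lra.
Qed.

Lemma zeta_partial_telescope s n : 1 < s -> (1 <= n)%nat ->
  zeta_partial s n <= 1 + (1 - Rpower (INR n) (1 - s)) / (s - 1).
Proof.
  intros Hs1 Hn. induction Hn as [|m Hm IH].
  - cbn. rewrite !Rpower_1_base. unfold Rdiv. lra.
  - change (zeta_partial s (S m)) with (zeta_partial s m + Rpower (INR (S m)) (- s)).
    pose proof (zeta_step s (INR m) Hs1 ltac:(apply (le_INR 1); auto)).
    rewrite <- S_INR in H. unfold Rdiv in *. lra.
Qed.

Lemma zeta_partial_bound s n : 1 < s -> zeta_partial s n <= 1 + / (s - 1).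
Proof.
  intros Hs1. assert (0 < / (s - 1)) by (apply Rinv_0_lt_compat; lra).
  destruct n as [|n]; [cbn; lra|].
  pose proof (zeta_partial_telescope s (S n) Hs1 ltac:(lia)).
  pose proof (Rpower_pos (INR (S n)) (1 - s)). unfold Rdiv in H0. nra.
Qed.

(* A self-improving bound: if [T <= P (1 + rho^b T)] with [0 < rho < 1] while also
   [rho^b T <= E^b A], then either [rho^b P <= 1/2] and [T <= 2P], or [b] is at most
   [log(2P) / -log rho] and [E^b] is a power of [2P]. *)
Lemma self_bound T P A rho E b : 0 <= T -> 0 < P -> 0 <= A -> 0 < rho < 1 -> 1 <= E ->
  T <= P * (1 + rho ^ b * T) -> rho ^ b * T <= E ^ b * A ->
  T <= 2 * P * (1 + A * Rpower (2 * P) (ln E / - ln rho)).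
Proof.
  intros HT HP HA Hr HE Hrec Hcap.
  assert (HlnE : 0 <= ln E) by (rewrite <- ln_1; apply ln_le; lra).
  assert (Hlnr : 0 < - ln rho) by (pose proof (ln_lt_0 rho Hr); lra).
  pose proof (Rpower_pos (2 * P) (ln E / - ln rho)).
  assert (H0 : 0 <= A * Rpower (2 * P) (ln E / - ln rho)) by nra.
  pose proof (pow_le rho b ltac:(lra)).
  destruct (Rle_dec (rho ^ b * P) (1 / 2)).
  - assert (rho ^ b * P * T <= 1 / 2 * T) by (apply Rmult_le_compat_r; auto). nra.
  - assert (HEb : E ^ b <= Rpower (2 * P) (ln E / - ln rho)).
    { assert (Hb1 : / (2 * P) < rho ^ b).
      { apply Rmult_lt_reg_r with (2 * P); [lra|]. rewrite Rinv_l by lra. lra. }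
      assert (Hrb : 0 < rho ^ b) by (eapply Rlt_trans; [|exact Hb1]; apply Rinv_0_lt_compat; lra).
      apply ln_increasing in Hb1; [|apply Rinv_0_lt_compat; lra].
      rewrite ln_Rinv, ln_pow in Hb1 by lra.
      assert (Hb2 : INR b <= ln (2 * P) / - ln rho).
      { apply Rmult_le_reg_r with (- ln rho); auto. unfold Rdiv.
        rewrite Rmult_assoc, Rinv_l by lra. lra. }
      rewrite <- Rpower_pow by lra. unfold Rpower.
      destruct (Req_dec (INR b * ln E) (ln E / - ln rho * ln (2 * P))) as [->|]; [lra|].
      left; apply exp_increasing.
      replace (ln E / - ln rho * ln (2 * P)) with (ln (2 * P) / - ln rho * ln E) by (field; lra).
      apply Rmult_le_compat_r with (r := ln E) in Hb2; auto. lra. }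
    assert (rho ^ b * T <= Rpower (2 * P) (ln E / - ln rho) * A).
    { eapply Rle_trans; [exact Hcap|]. apply Rmult_le_compat_r; auto. }
    nra.
Qed.

Lemma self_bound_poly c e g A x : 0 < c -> 0 <= e -> 0 <= g -> 0 <= A -> 1 <= x ->
  2 * (c * Rpower x e) * (1 + A * Rpower (2 * (c * Rpower x e)) g)
  <= 2 * c * (1 + A * Rpower (2 * c) g) * Rpower x (e * (1 + g)).
Proof.
  intros Hc He Hg HA Hx.
  assert (H1 : 1 <= Rpower x e) by (apply Rpower_ge1; lra).
  assert (H2 : 1 <= Rpower x (e * g)) by (apply Rpower_ge1; [lra|]; apply Rmult_le_pos; lra).
  assert (E : Rpower (2 * (c * Rpower x e)) g = Rpower (2 * c) g * Rpower x (e * g)).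
  { replace (2 * (c * Rpower x e)) with ((2 * c) * Rpower x e) by ring.
    rewrite <- Rpower_mult_distr, Rpower_mult by (try apply Rpower_pos; lra). reflexivity. }
  rewrite E.
  replace (Rpower x (e * (1 + g))) with (Rpower x e * Rpower x (e * g))
    by (rewrite <- Rpower_plus; f_equal; ring).
  set (X := Rpower x e) in *. set (Y := Rpower x (e * g)) in *.
  set (Q := A * Rpower (2 * c) g).
  replace (2 * (c * X) * (1 + A * (Rpower (2 * c) g * Y)))
    with (2 * c * (1 + Q) * (X * Y) - 2 * c * X * (Y - 1)) by (unfold Q; ring).
  assert (0 <= 2 * c * X * (Y - 1)) by (apply Rmult_le_pos; [apply Rmult_le_pos|]; lra).
  lra.
Qed.

(* Comparing [v] with [w = min(v,1)/2 < v], a level at which tractability applies. *)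
Lemma rpow0_le_halved_min v Mx tau : 0 < tau -> 0 < v <= Mx ->
  rpow0 v tau <= Rpower 2 tau * (1 + rpow0 Mx tau) * Rpower (Rmin v 1 / 2) tau.
Proof.
  intros Htau Hv. pose proof (rpow0_nonneg Mx tau). pose proof (Rpower_pos 2 tau).
  unfold Rmin; destruct (Rle_dec v 1).
  - pose proof (Rpower_pos (v / 2) tau).
    rewrite rpow0_pos by lra. replace v with (2 * (v / 2)) at 1 by field.
    rewrite <- Rpower_mult_distr by lra.
    assert (0 <= Rpower 2 tau * Rpower (v / 2) tau * rpow0 Mx tau).
    { apply Rmult_le_pos; [apply Rmult_le_pos|]; lra. }
    nra.
  - rewrite Rmult_assoc, (Rmult_comm (1 + _)), <- Rmult_assoc.
    rewrite Rpower_mult_distr by lra. replace (2 * (1 / 2)) with 1 by field.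
    rewrite Rpower_1_base. pose proof (rpow0_le v Mx tau ltac:(lra) ltac:(lra)). lra.
Qed.

(** Ranks of positions.  [count_below l n] counts the elements of [l] below [n];
    for the increasing list [I d], an antisymmetric position [i] is the
    [count_below (I d) i]-th one, which is the smallest index value a
    strictly increasing multi-index can carry there. *)

Fixpoint count_below (l : list nat) (n : nat) : nat :=
  match n with
  | O => O
  | S n' => (count_below l n' + if in_dec Nat.eq_dec n' l then 1 else 0)%nat
  end.

Lemma count_below_le l n : (count_below l n <= n)%nat.
Proof. induction n; cbn; auto. destruct (in_dec Nat.eq_dec n l); lia. Qed.

Lemma count_below_mono l m n : (m <= n)%nat -> (count_below l m <= count_below l n)%nat.
Proof. intros H; induction H; auto. cbn; lia. Qed.

Lemma count_below_lt l i j : In i l -> (i < j)%nat -> (count_below l i < count_below l j)%nat.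
Proof.
  intros Hi Hij. pose proof (count_below_mono l (S i) j Hij) as H. cbn in H.
  destruct (in_dec Nat.eq_dec i l); [lia|contradiction].
Qed.

Lemma count_below_cons x l n : ~ In x l ->
  count_below (x :: l) n = ((if (x <? n)%nat then 1 else 0) + count_below l n)%nat.
Proof.
  intros Hx; induction n as [|n IH]; [reflexivity|]. cbn [count_below]. rewrite IH.
  destruct (Nat.eq_dec x n) as [<-|Hxn].
  - destruct (in_dec Nat.eq_dec x (x :: l)) as [_|Hn]; [|exfalso; apply Hn; left; auto].
    destruct (in_dec Nat.eq_dec x l) as [Hl|_]; [contradiction|].
    destruct (Nat.ltb_spec x x), (Nat.ltb_spec x (S x)); lia.
  - assert (E : In n (x :: l) <-> In n l) by (cbn; intuition).
    destruct (in_dec Nat.eq_dec n (x :: l)) as [Hn|Hn], (in_dec Nat.eq_dec n l) as [Hl|Hl];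
      try tauto; destruct (Nat.ltb_spec x n), (Nat.ltb_spec x (S n)); lia.
Qed.

Lemma count_below_zero l n : (forall x, In x l -> (n <= x)%nat) -> count_below l n = 0%nat.
Proof.
  induction n as [|n IH]; intros Hl; cbn; auto.
  rewrite IH by (intros x Hx; specialize (Hl x Hx); lia).
  destruct (in_dec Nat.eq_dec n l) as [E|]; auto. specialize (Hl n E); lia.
Qed.

Lemma count_below_full l d : NoDup l -> (forall x, In x l -> (x < d)%nat) ->
  count_below l d = length l.
Proof.
  intros Hn; induction Hn as [|x l Hx Hn IH]; intros Hb.
  { apply count_below_zero; intros x []. }
  cbn [length]. rewrite count_below_cons, IH by (auto; intros; apply Hb; right; auto).
  specialize (Hb x (or_introl eq_refl)). destruct (Nat.ltb_spec x d); lia.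
Qed.

Lemma count_below_lower_from (g : nat -> nat) l :
  StronglySorted lt l -> StronglySorted lt (map g l) ->
  forall m, (forall y, In y l -> (m <= g y)%nat) ->
  forall y, In y l -> (m + count_below l y <= g y)%nat.
Proof.
  induction l as [|x l IH]; intros Hs Hm m Hb y Hy; [destruct Hy|].
  inversion Hs as [|? ? Hs' Hf]; subst. cbn in Hm. inversion Hm as [|? ? Hm' Hfm]; subst.
  rewrite Forall_forall in Hf, Hfm.
  assert (Hx : ~ In x l) by (intros Hin; specialize (Hf x Hin); lia).
  rewrite count_below_cons by auto.
  destruct Hy as [<-|Hy].
  - rewrite count_below_zero by (intros z Hz; specialize (Hf z Hz); lia).
    destruct (Nat.ltb_spec x x); [lia|]. specialize (Hb x (or_introl eq_refl)); lia.
  - pose proof (Hf y Hy). destruct (Nat.ltb_spec x y); [|lia].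
    assert (m + 1 + count_below l y <= g y)%nat; [|lia].
    apply IH; auto. intros z Hz.
    specialize (Hfm (g z) (in_map g l z Hz)). specialize (Hb x (or_introl eq_refl)); lia.
Qed.

Lemma count_below_lower (g : nat -> nat) l : Sorted lt l -> Sorted lt (map g l) ->
  forall y, In y l -> (count_below l y <= g y)%nat.
Proof.
  intros Hl Hg y Hy.
  apply (count_below_lower_from g l) with (m := 0%nat); auto;
    try (apply Sorted_StronglySorted; auto; exact Nat.lt_trans).
  intros; lia.
Qed.

Lemma sorted_map_mono (f : nat -> nat) l : StronglySorted lt l ->
  (forall x y, In x l -> In y l -> (x < y)%nat -> (f x < f y)%nat) -> Sorted lt (map f l).
Proof.
  induction 1 as [|a l Hs IH Hf]; intros Hm; cbn; constructor.
  - apply IH; intros; apply Hm; auto; right; auto.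
  - destruct l as [|b l']; cbn; constructor. apply Hm; [left|right; left|]; auto.
    inversion Hf; auto.
Qed.

Lemma prod_over_positions (l : list nat) (h : nat -> R) (c : R) n :
  lprod (map (fun i => if in_dec Nat.eq_dec i l then h (count_below l i) else c) (seq 0 n)) =
  c ^ (n - count_below l n) * lprod (map h (seq 0 (count_below l n))).
Proof.
  induction n as [|n IH]; [cbn; unfold lprod; cbn; ring|].
  rewrite seq_S, map_app, lprod_app, IH, Nat.add_0_l. cbn [count_below map].
  pose proof (count_below_le l n).
  unfold lprod at 2; cbn [fold_right]. rewrite Rmult_1_r.
  destruct (in_dec Nat.eq_dec n l).
  - rewrite Nat.add_1_r, (seq_S (count_below l n)), map_app, lprod_app, Nat.add_0_l.
    replace (S n - S (count_below l n))%nat with (n - count_below l n)%nat by lia.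
    unfold lprod at 3; cbn [map fold_right]. ring.
  - rewrite Nat.add_0_r. replace (S n - count_below l n)%nat with (S (n - count_below l n)) by lia.
    cbn [pow]. ring.
Qed.

Lemma map_nth_seq (k : list nat) : map (fun i => nth i k 0%nat) (seq 0 (length k)) = k.
Proof.
  induction k as [|m k IH]; cbn; auto. f_equal.
  rewrite <- seq_shift, map_map. exact IH.
Qed.

Lemma nth_map_seq (g : nat -> nat) d i : (i < d)%nat -> nth i (map g (seq 0 d)) 0%nat = g i.
Proof.
  intros H. rewrite nth_indep with (d' := g 0%nat) by (rewrite length_map, length_seq; auto).
  rewrite map_nth, seq_nth; auto.
Qed.

Lemma eigen_antitone lam : eigen_seq lam -> forall m n, (m <= n)%nat -> lam n <= lam m.
Proof. intros [_ [H _]] m n Hmn; induction Hmn as [|n Hmn IH]; [lra|]. specialize (H n); lra. Qed.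

Lemma lam_prod_nonneg lam k : (forall m, 0 <= lam m) -> 0 <= lam_prod lam k.
Proof. intros; rewrite lam_prod_eq; apply lprod_nonneg; auto. Qed.

(** For [k] in nabla_d the free positions carry at most
    [lambda_1], and the strictly increasing antisymmetric positions carry at most
    [lambda_1, ..., lambda_{a_d}] in order; the multi-index [top_index] attains
    this bound, so [lambda_{d,psi(1)} = lambda_1^(b_d) * lambda_1 ... lambda_{a_d}]. *)

Definition head_prod (lam : nat -> R) (a : nat) : R := lprod (map lam (seq 0 a)).

Definition top_eig (lam : nat -> R) (I : nat -> list nat) (d : nat) : R :=
  lam 0%nat ^ (d - length (I d)) * head_prod lam (length (I d)).

Definition top_index (I : nat -> list nat) (d : nat) : list nat :=
  map (fun i => if in_dec Nat.eq_dec i (I d) then count_below (I d) i else 0%nat) (seq 0 d).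

Lemma head_prod_nonneg lam a : eigen_seq lam -> 0 <= head_prod lam a.
Proof. intros [Hnn _]. apply lprod_nonneg; auto. Qed.

Lemma top_eig_nonneg lam I d : eigen_seq lam -> 0 <= top_eig lam I d.
Proof.
  intros Hlam. apply Rmult_le_pos; [apply pow_le, Hlam|apply head_prod_nonneg, Hlam].
Qed.

Lemma head_prod_geometric lam eta : eigen_seq lam -> 0 < eta <= 1 ->
  exists B, 0 <= B /\ forall a, head_prod lam a <= eta ^ a * B.
Proof.
  intros Hlam Heta. pose proof Hlam as [Hnn [_ Hcv]].
  destruct (Hcv eta ltac:(lra)) as [t0 Ht0].
  assert (Hsmall : forall t, (t0 <= t)%nat -> lam t <= eta).
  { intros t Ht. specialize (Ht0 t Ht). unfold R_dist in Ht0. apply Rabs_def2 in Ht0. lra. }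
  set (E := Rmax 1 (lam 0%nat / eta)).
  assert (HE : 1 <= E) by apply Rmax_l.
  assert (HE2 : lam 0%nat <= eta * E).
  { replace (lam 0%nat) with (eta * (lam 0%nat / eta)) by (field; lra).
    apply Rmult_le_compat_l; [lra|apply Rmax_r]. }
  exists (E ^ t0). split; [apply pow_le; lra|].
  (* Invariant: [head_prod lam a <= eta^a E^min(a, t0)]. *)
  assert (Hinv : forall a, head_prod lam a <= eta ^ a * E ^ (Nat.min a t0)).
  { induction a as [|a IH]; [unfold head_prod, lprod; cbn; lra|].
    unfold head_prod in *. rewrite seq_S, map_app, lprod_app.
    change (lprod (map lam [(0 + a)%nat])) with (lam a * 1). rewrite Rmult_1_r.
    pose proof (Hnn a). pose proof (lprod_nonneg lam (seq 0 a) ltac:(auto)).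
    pose proof (pow_le E (Nat.min a t0) ltac:(lra)).
    assert (0 <= eta ^ a * E ^ Nat.min a t0) by (apply Rmult_le_pos; [apply pow_le|]; lra).
    apply Rle_trans with (eta ^ a * E ^ Nat.min a t0 * lam a); [apply Rmult_le_compat_r; auto|].
    cbn [pow]. destruct (Nat.lt_ge_cases a t0).
    - replace (Nat.min (S a) t0) with (S (Nat.min a t0)) by lia. cbn [pow].
      pose proof (eigen_antitone lam Hlam 0 a ltac:(lia)).
      apply Rle_trans with (eta ^ a * E ^ Nat.min a t0 * (eta * E)); [|right; ring].
      apply Rmult_le_compat_l; lra.
    - replace (Nat.min (S a) t0) with (Nat.min a t0) by lia. specialize (Hsmall a H3).
      apply Rle_trans with (eta ^ a * E ^ Nat.min a t0 * eta); [|right; ring].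
      apply Rmult_le_compat_l; lra. }
  intros a. eapply Rle_trans; [apply Hinv|].
  apply Rmult_le_compat_l; [apply pow_le; lra|]. apply Rle_pow; [lra|lia].
Qed.

Lemma top_eig_rpow lam I d tau : eigen_seq lam ->
  rpow0 (top_eig lam I d) tau
  = rpow0 (lam 0%nat) tau ^ (d - length (I d)) * rpow0 (head_prod lam (length (I d))) tau.
Proof.
  intros Hlam. unfold top_eig. rewrite rpow0_mult, rpow0_pow; auto.
  - apply Hlam.
  - apply pow_le, Hlam.
  - apply head_prod_nonneg; auto.
Qed.

Lemma top_eig_rpow_cap lam I tau : eigen_seq lam -> 0 <= tau ->
  exists A, 0 <= A /\ forall d,
    rpow0 (top_eig lam I d) tau <= Rmax 1 (rpow0 (lam 0%nat) tau) ^ (d - length (I d)) * A.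
Proof.
  intros Hlam Htau. destruct (head_prod_geometric lam 1 Hlam ltac:(lra)) as [B [HB Hhead]].
  exists (rpow0 B tau). split; [apply rpow0_nonneg|]. intros d.
  rewrite top_eig_rpow by auto. pose proof (rpow0_nonneg (lam 0%nat) tau).
  apply Rmult_le_compat; [apply pow_le; lra|apply rpow0_nonneg| |].
  - apply pow_incr. split; [lra|apply Rmax_r].
  - apply rpow0_le; [lra|split; [apply head_prod_nonneg; auto|]].
    specialize (Hhead (length (I d))). rewrite pow1 in Hhead. lra.
Qed.

(* When more than half of the positions are antisymmetric, the top eigenvalue decays
   geometrically: [lambda_1^b <= E0^d] while [lambda_1 ... lambda_a <= B eta^a] with
   [eta = (2 E0)^-2] and [2a > d]. *)
Lemma top_eig_many_antisym lam I : eigen_seq lam ->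
  exists B, 0 <= B /\ forall d, (d < 2 * length (I d))%nat -> top_eig lam I d <= (/ 2) ^ d * B.
Proof.
  intros Hlam. pose proof Hlam as [Hnn _].
  set (E0 := Rmax 1 (lam 0%nat)). assert (HE0 : 1 <= E0) by apply Rmax_l.
  set (eta1 := / (2 * E0)).
  assert (Heta1 : 0 < eta1 <= 1 / 2).
  { unfold eta1; split; [apply Rinv_0_lt_compat; lra|].
    apply Rmult_le_reg_l with (2 * E0); [lra|]. rewrite Rinv_r by lra. lra. }
  destruct (head_prod_geometric lam (eta1 * eta1) Hlam ltac:(nra)) as [B [HB Hhead]].
  exists B; split; auto. intros d Hd. unfold top_eig.
  set (a := length (I d)) in *. set (b := (d - a)%nat).
  assert (Hb : lam 0%nat ^ b <= E0 ^ d).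
  { eapply Rle_trans; [apply pow_incr; split; [apply Hnn|apply Rmax_r]|].
    apply Rle_pow; auto; lia. }
  assert (Ha : (eta1 * eta1) ^ a <= eta1 ^ d).
  { rewrite Rpow_mult_distr, <- pow_add. apply pow_anti; [lra|lia]. }
  assert (Hhalf : E0 ^ d * eta1 ^ d = (/ 2) ^ d).
  { rewrite <- Rpow_mult_distr. f_equal. unfold eta1. field. lra. }
  pose proof (pow_le (lam 0%nat) b (Hnn 0%nat)). pose proof (pow_le eta1 d ltac:(lra)).
  pose proof (pow_le (eta1 * eta1) a ltac:(nra)). pose proof (head_prod_nonneg lam a Hlam).
  apply Rle_trans with (lam 0%nat ^ b * ((eta1 * eta1) ^ a * B)).
  { apply Rmult_le_compat_l; auto. }
  apply Rle_trans with (E0 ^ d * (eta1 ^ d * B)).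
  { apply Rmult_le_compat; auto; [apply Rmult_le_pos; auto|apply Rmult_le_compat_r; auto]. }
  rewrite <- Hhalf. right; ring.
Qed.

Section IndexSets.

Variable I : nat -> list nat.
Hypothesis HI : valid_index_sets I.

Lemma index_set_facts d : (1 <= d)%nat ->
  Sorted lt (I d) /\ (forall i, In i (I d) -> (i < d)%nat) /\
  count_below (I d) d = length (I d).
Proof.
  intros Hd. destruct HI as [_ HId]. destruct (HId d Hd) as [_ [Hs Hr]].
  repeat split; auto. apply count_below_full; auto.
  apply (NoDup_map_inv (fun x => x)). rewrite map_id.
  clear -Hs. apply Sorted_StronglySorted in Hs; [|exact Nat.lt_trans].
  induction Hs as [|a l Hs IH Hf]; constructor; auto.
  rewrite Forall_forall in Hf. intros Hin; specialize (Hf a Hin); lia.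
Qed.

Lemma length_index_set_le d : (1 <= d)%nat -> (length (I d) <= d)%nat.
Proof.
  intros Hd. destruct (index_set_facts d Hd) as [_ [_ Hc]].
  rewrite <- Hc. apply count_below_le.
Qed.

Lemma in_nabla_of_ranks d k : (1 <= d)%nat -> length k = d ->
  (forall i, In i (I d) -> nth i k 0%nat = count_below (I d) i) -> in_nablaA d (I d) k.
Proof.
  intros Hd Hl Hk. destruct (index_set_facts d Hd) as [Hs _].
  split; auto. rewrite (map_ext_in _ (count_below (I d))) by auto.
  apply sorted_map_mono; [apply Sorted_StronglySorted; auto; exact Nat.lt_trans|].
  intros; apply count_below_lt; auto.
Qed.

Lemma top_index_in_nabla d : (1 <= d)%nat -> in_nablaA d (I d) (top_index I d).
Proof.
  intros Hd. destruct (index_set_facts d Hd) as [_ [Hr _]].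
  apply in_nabla_of_ranks; auto; [unfold top_index; rewrite length_map, length_seq; auto|].
  intros i Hi. unfold top_index; rewrite nth_map_seq by auto.
  destruct (in_dec Nat.eq_dec i (I d)); [auto|contradiction].
Qed.

Variable lam : nat -> R.
Hypothesis Hlam : eigen_seq lam.

Lemma lam_prod_top_index d : (1 <= d)%nat -> lam_prod lam (top_index I d) = top_eig lam I d.
Proof.
  intros Hd. destruct (index_set_facts d Hd) as [_ [_ Hc]].
  unfold top_eig, head_prod. rewrite <- Hc, <- prod_over_positions.
  rewrite lam_prod_eq. unfold top_index. rewrite map_map. f_equal. apply map_ext. intros i.
  destruct (in_dec Nat.eq_dec i (I d)); auto.
Qed.

Lemma lam_prod_le_top_eig d k : (1 <= d)%nat -> in_nablaA d (I d) k ->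
  lam_prod lam k <= top_eig lam I d.
Proof.
  intros Hd [Hl Hs]. destruct (index_set_facts d Hd) as [HIs [_ Hc]].
  unfold top_eig, head_prod. rewrite <- Hc, <- prod_over_positions.
  rewrite lam_prod_eq, <- (map_nth_seq k), map_map, Hl.
  apply lprod_le. intros i Hi. split; [apply Hlam|].
  destruct (in_dec Nat.eq_dec i (I d)) as [Hin|]; apply eigen_antitone; auto; [|lia].
  apply (count_below_lower (fun i => nth i k 0%nat)); auto.
Qed.

Lemma top_eig_largest d : (1 <= d)%nat -> is_largest_eig lam I d (top_eig lam I d).
Proof.
  intros Hd. split.
  - exists (top_index I d); split; [apply top_index_in_nabla|apply lam_prod_top_index]; auto.
  - intros; apply lam_prod_le_top_eig; auto.
Qed.

Lemma head_eigs_pos d : (1 <= d)%nat ->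
  (exists k, in_nablaA d (I d) k /\ 0 < lam_prod lam k) ->
  forall t, (t < length (I d))%nat -> 0 < lam t.
Proof.
  intros Hd [k [Hk Hp]] t Ht. pose proof (lam_prod_le_top_eig d k Hd Hk) as Hle.
  assert (Hh : 0 < head_prod lam (length (I d))).
  { unfold top_eig in Hle. pose proof (head_prod_nonneg lam (length (I d)) Hlam).
    pose proof (pow_le (lam 0%nat) (d - length (I d)) (proj1 Hlam 0%nat)).
    destruct (Req_dec (head_prod lam (length (I d))) 0) as [E|E]; [rewrite E in Hle|]; lra. }
  apply (lprod_pos_each lam (seq 0 (length (I d)))); auto.
  - intros; apply Hlam.
  - apply in_seq; lia.
Qed.

End IndexSets.

Fixpoint product_family (ch : nat -> list nat) (i n : nat) : list (list nat) :=
  match n with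
  | O => [[]]
  | S n' => flat_map (fun c => map (cons c) (product_family ch (S i) n')) (ch i)
  end.

Lemma product_family_mem ch n : forall i k, In k (product_family ch i n) ->
  length k = n /\ forall l, (l < n)%nat -> In (nth l k 0%nat) (ch (i + l)%nat).
Proof.
  induction n as [|n IH]; intros i k Hk; cbn in Hk.
  - destruct Hk as [<-|[]]; split; auto; intros; lia.
  - apply in_flat_map in Hk as [c [Hc Hk]]. apply in_map_iff in Hk as [k' [<- Hk']].
    destruct (IH _ _ Hk') as [Hl Hn]. split; cbn; auto.
    intros [|l] Hlt; cbn; [rewrite Nat.add_0_r; auto|].
    replace (i + S l)%nat with (S i + l)%nat by lia. apply Hn; lia.
Qed.

Lemma product_family_nodup ch n : (forall j, NoDup (ch j)) ->
  forall i, NoDup (product_family ch i n).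
Proof.
  intros Hch; induction n as [|n IH]; intros i; cbn; [repeat constructor; intros []|].
  specialize (IH (S i)). induction (Hch i) as [|a L Ha HL IHL]; cbn; [constructor|].
  apply NoDup_app; auto.
  - apply NoDup_map_NoDup_ForallPairs; auto. intros x y _ _ E; now injection E.
  - intros k Hk Hk2. apply in_map_iff in Hk as [k' [<- _]].
    apply in_flat_map in Hk2 as [c [Hc Hk2]]. apply in_map_iff in Hk2 as [k'' [E _]].
    injection E as <-. contradiction.
Qed.

Lemma product_family_sum ch (g : nat -> R) n : forall i,
  lsum (map (fun k => lprod (map g k)) (product_family ch i n)) =
  lprod (map (fun j => lsum (map g (ch j))) (seq i n)).
Proof.
  induction n as [|n IH]; intros i; [unfold lsum, lprod; cbn; ring|].
  cbn [product_family seq map]. rewrite lsum_flat.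
  change (lprod (lsum (map g (ch i)) :: map (fun j => lsum (map g (ch j))) (seq (S i) n)))
    with (lsum (map g (ch i)) * lprod (map (fun j => lsum (map g (ch j))) (seq (S i) n))).
  rewrite <- IH, Rmult_comm, <- lsum_scal. f_equal. apply map_ext; intros c.
  rewrite map_map, Rmult_comm, <- lsum_scal. reflexivity.
Qed.

Section Tractability.

Variables (lam : nat -> R) (I : nat -> list nat) (C p q : R).
Hypothesis Hlam : eigen_seq lam.
Hypothesis HI : valid_index_sets I.
Hypothesis Htr : poly_tractable_with lam I C p q.

(* The exponent [s = 2 tau / p] exceeds 1, so that [sum_j j^-s] converges. *)
Lemma exponent_gt1 tau : p / 2 < tau -> 1 < 2 * tau / p.
Proof.
  intros Htau. destruct Htr as [_ [Hp _]].
  apply Rmult_lt_reg_r with p; auto. unfold Rdiv. rewrite Rmult_assoc, Rinv_l; lra.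
Qed.

(* Tractability at [eps = sqrt w]: [n] distinct eigenvalues above [w] force
   [w^(p/2) <= C d^q / n], i.e. [w^tau <= (C d^q / n)^(2 tau / p)]. *)
Lemma tractable_level_bound tau d ks w : (1 <= d)%nat -> 0 < tau -> 0 < w <= 1 ->
  NoDup ks -> (1 <= length ks)%nat ->
  (forall k, In k ks -> in_nablaA d (I d) k /\ w < lam_prod lam k) ->
  Rpower w tau <= Rpower (C * Rpower (INR d) q / INR (length ks)) (2 * tau / p).
Proof.
  intros Hd Htau Hw Hn Hl Hk. destruct Htr as [HC [Hp [Hq Ht]]].
  assert (Hs0 : 0 < sqrt w) by (apply sqrt_lt_R0; lra).
  assert (Hs1 : sqrt w <= 1) by (rewrite <- sqrt_1; apply sqrt_le_1; lra).
  assert (Hcount : INR (length ks) <= C * Rpower w (- (p / 2)) * Rpower (INR d) q).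
  { replace (Rpower w (- (p / 2))) with (Rpower (sqrt w) (- p)).
    - apply (Ht d (sqrt w) Hd (conj Hs0 Hs1) ks Hn).
      intros k Hk'. destruct (Hk k Hk'); split; auto. rewrite pow2_sqrt; lra.
    - rewrite <- Rpower_sqrt, Rpower_mult by lra. f_equal. field. }
  set (D := Rpower (INR d) q) in *. set (n := INR (length ks)) in *.
  assert (Hn1 : 1 <= n) by (unfold n; apply (le_INR 1); auto).
  pose proof (Rpower_pos (INR d) q). pose proof (Rpower_pos w (p / 2)).
  rewrite Rpower_Ropp in Hcount.
  assert (Hlevel : Rpower w (p / 2) <= C * D / n).
  { apply Rmult_le_reg_r with (r := n / Rpower w (p / 2)); [apply Rdiv_lt_0_compat; lra|].
    replace (Rpower w (p / 2) * (n / Rpower w (p / 2))) with n by (field; lra).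
    replace (C * D / n * (n / Rpower w (p / 2))) with (C * / Rpower w (p / 2) * D)
      by (field; lra). exact Hcount. }
  replace (Rpower w tau) with (Rpower (Rpower w (p / 2)) (2 * tau / p))
    by (rewrite Rpower_mult; f_equal; field; lra).
  apply Rle_Rpower_l; [apply Rlt_le, Rdiv_lt_0_compat; lra|lra].
Qed.

Lemma tractable_value_bound tau d ks v : (1 <= d)%nat -> 0 < tau ->
  NoDup ks -> (forall k, In k ks -> in_nablaA d (I d) k) -> (1 <= length ks)%nat ->
  0 < v -> (forall k, In k ks -> v <= lam_prod lam k) ->
  rpow0 v tau <= Rpower 2 tau * (1 + rpow0 (top_eig lam I d) tau) *
     Rpower (C * Rpower (INR d) q / INR (length ks)) (2 * tau / p).
Proof.
  intros Hd Htau Hn Hk Hl Hv Hvk.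
  assert (Hvtop : v <= top_eig lam I d).
  { destruct ks as [|k ks]; [cbn in Hl; lia|].
    apply Rle_trans with (lam_prod lam k); [apply Hvk|apply lam_prod_le_top_eig, Hk]; auto;
      left; auto. }
  eapply Rle_trans; [apply (rpow0_le_halved_min v (top_eig lam I d)); auto|].
  pose proof (rpow0_nonneg (top_eig lam I d) tau). pose proof (Rpower_pos 2 tau).
  apply Rmult_le_compat_l; [nra|].
  apply tractable_level_bound; auto;
    [unfold Rmin; destruct (Rle_dec v 1); lra|].
  intros k Hk'. split; auto. specialize (Hvk k Hk').
  unfold Rmin; destruct (Rle_dec v 1); lra.
Qed.

(* The sum of [tau]-th powers over any [n] distinct indices of nabla_d: removing the
   smallest one, which is bounded by [tractable_value_bound], reduces [n] by one. *)
Lemma family_power_sum_zeta tau d : (1 <= d)%nat -> p / 2 < tau ->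
  forall n ks, length ks = n -> NoDup ks -> (forall k, In k ks -> in_nablaA d (I d) k) ->
  lsum (map (fun k => rpow0 (lam_prod lam k) tau) ks) <=
  Rpower 2 tau * (1 + rpow0 (top_eig lam I d) tau) * Rpower (C * Rpower (INR d) q) (2 * tau / p)
    * zeta_partial (2 * tau / p) n.
Proof.
  intros Hd Htau. pose proof Htr as [HC [Hp [Hq _]]].
  set (K := Rpower 2 tau * (1 + rpow0 (top_eig lam I d) tau)
              * Rpower (C * Rpower (INR d) q) (2 * tau / p)).
  assert (HK : 0 <= K).
  { pose proof (rpow0_nonneg (top_eig lam I d) tau). pose proof (Rpower_pos 2 tau).
    pose proof (Rpower_pos (C * Rpower (INR d) q) (2 * tau / p)).
    unfold K; apply Rmult_le_pos; [apply Rmult_le_pos|]; lra. }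
  assert (HCD : 0 < C * Rpower (INR d) q) by (pose proof (Rpower_pos (INR d) q); nra).
  induction n as [|n IH]; intros ks Hl Hn Hk.
  { destruct ks; [|cbn in Hl; lia]. cbn. unfold lsum; cbn. lra. }
  destruct (min_exists (lam_prod lam) ks) as [k0 [Hk0 Hmin]].
  { intros E; subst; cbn in Hl; lia. }
  destruct (in_split _ _ Hk0) as [l1 [l2 ->]].
  assert (Hsub : forall k, In k (l1 ++ l2) -> In k (l1 ++ k0 :: l2)).
  { intros k Hk'; apply in_app_or in Hk' as [?|?]; apply in_or_app; [left|right; right]; auto. }
  specialize (IH (l1 ++ l2) ltac:(rewrite length_app in *; cbn in Hl; lia)
    (NoDup_remove_1 _ _ _ Hn) ltac:(intros; apply Hk, Hsub; auto)).
  rewrite map_app, lsum_app in *.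
  change (lsum (map (fun k => rpow0 (lam_prod lam k) tau) (k0 :: l2)))
    with (rpow0 (lam_prod lam k0) tau + lsum (map (fun k => rpow0 (lam_prod lam k) tau) l2)).
  assert (Hsmallest : rpow0 (lam_prod lam k0) tau <= K * Rpower (INR (S n)) (- (2 * tau / p))).
  { pose proof (lam_prod_nonneg lam k0 (proj1 Hlam)).
    pose proof (Rpower_pos (INR (S n)) (- (2 * tau / p))).
    destruct (Req_dec (lam_prod lam k0) 0) as [Z|Z].
    - rewrite Z, rpow0_0 by lra. nra.
    - pose proof (tractable_value_bound tau d (l1 ++ k0 :: l2) (lam_prod lam k0) Hd
        ltac:(lra) Hn Hk ltac:(rewrite Hl; lia) ltac:(lra) Hmin) as Hb.
      rewrite Hl, Rpower_div in Hb by (auto; apply lt_0_INR; lia).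
      unfold K. eapply Rle_trans; [exact Hb|right; ring]. }
  change (zeta_partial (2 * tau / p) (S n))
    with (zeta_partial (2 * tau / p) n + Rpower (INR (S n)) (- (2 * tau / p))).
  lra.
Qed.

Definition family_const (tau : R) : R :=
  Rpower 2 tau * Rpower C (2 * tau / p) * (1 + / (2 * tau / p - 1)).

Definition family_sum_bound (tau : R) (d : nat) : R :=
  family_const tau * Rpower (INR d) (q * (2 * tau / p)) * (1 + rpow0 (top_eig lam I d) tau).

Lemma family_const_pos tau : p / 2 < tau -> 0 < family_const tau.
Proof.
  intros Htau. pose proof (exponent_gt1 tau Htau).
  pose proof (Rpower_pos 2 tau). pose proof (Rpower_pos C (2 * tau / p)).
  pose proof (Rinv_0_lt_compat (2 * tau / p - 1) ltac:(lra)).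
  unfold family_const; apply Rmult_lt_0_compat; [apply Rmult_lt_0_compat|]; lra.
Qed.

Lemma family_power_sum_bound tau d ks : (1 <= d)%nat -> p / 2 < tau ->
  NoDup ks -> (forall k, In k ks -> in_nablaA d (I d) k) ->
  lsum (map (fun k => rpow0 (lam_prod lam k) tau) ks) <= family_sum_bound tau d.
Proof.
  intros Hd Htau Hn Hk. pose proof Htr as [HC [Hp [Hq _]]].
  eapply Rle_trans; [apply (family_power_sum_zeta tau d Hd Htau (length ks)); auto|].
  replace (family_sum_bound tau d) with
    (Rpower 2 tau * (1 + rpow0 (top_eig lam I d) tau) * Rpower (C * Rpower (INR d) q) (2 * tau / p)
     * (1 + / (2 * tau / p - 1))).
  2:{ rewrite <- Rpower_mult_distr, Rpower_mult by (try apply Rpower_pos; lra).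
      unfold family_sum_bound, family_const. ring. }
  apply Rmult_le_compat_l.
  - pose proof (rpow0_nonneg (top_eig lam I d) tau). pose proof (Rpower_pos 2 tau).
    pose proof (Rpower_pos (C * Rpower (INR d) q) (2 * tau / p)).
    apply Rmult_le_pos; [apply Rmult_le_pos|]; lra.
  - apply zeta_partial_bound, exponent_gt1; auto.
Qed.

Hypothesis Hlam1 : 0 < lam 1%nat.

(* At [d = 1] the problem is [S_1] itself, so tractability bounds the partial sums
   of [sum_m lambda_m^tau]: lambda lies in l_tau for every [tau > p/2], and its
   l_tau mass exceeds [lambda_1^tau] because [lambda_2 > 0]. *)
Lemma eigen_summable tau : p / 2 < tau ->
  exists L, Un_cv (sum_f_R0 (fun m => rpow0 (lam m) tau)) L /\ rpow0 (lam 0%nat) tau < L.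
Proof.
  intros Htau. set (f := fun m => rpow0 (lam m) tau).
  assert (Hg : Un_growing (sum_f_R0 f)).
  { intros n. cbn. pose proof (rpow0_nonneg (lam (S n)) tau). unfold f; lra. }
  assert (Hub : has_ub (sum_f_R0 f)).
  { exists (family_sum_bound tau 1). intros x [n ->]. rewrite <- lsum_seq_sum.
    set (ks := map (fun m => [m]) (seq 0 (S n))).
    replace (lsum (map f (seq 0 (S n))))
      with (lsum (map (fun k => rpow0 (lam_prod lam k) tau) ks)).
    2:{ unfold ks; rewrite map_map. f_equal. apply map_ext; intros m. cbn. now rewrite Rmult_1_r. }
    apply family_power_sum_bound; auto.
    - apply NoDup_map_NoDup_ForallPairs; [intros x y _ _ E; now injection E|apply seq_NoDup].
    - intros k Hk. unfold ks in Hk. apply in_map_iff in Hk as [m [<- _]].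
      destruct HI as [HI1 _]. rewrite HI1. split; [reflexivity|]. repeat constructor. }
  destruct (growing_cv _ Hg Hub) as [L HL].
  exists L. split; auto.
  pose proof (growing_ineq _ _ Hg HL 1%nat) as H1. cbn in H1. unfold f in H1.
  pose proof (rpow0_gt0 (lam 1%nat) tau Hlam1). lra.
Qed.

(* [frozen_sum L tau d] is the sum of [lambda_{d,k}^tau] over the [k] in nabla_d whose
   antisymmetric entries are frozen at their ranks: each free position contributes
   the full l_tau mass [L], the antisymmetric ones [(lambda_1 ... lambda_{a_d})^tau]. *)
Definition frozen_sum (L tau : R) (d : nat) : R :=
  L ^ (d - length (I d)) * rpow0 (head_prod lam (length (I d))) tau.

Lemma frozen_sum_bound tau L d : p / 2 < tau -> (1 <= d)%nat ->
  Un_cv (sum_f_R0 (fun m => rpow0 (lam m) tau)) L ->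
  frozen_sum L tau d <= family_sum_bound tau d.
Proof.
  intros Htau Hd HL. destruct (index_set_facts I HI d Hd) as [_ [Hr Hc]].
  set (g := fun m => rpow0 (lam m) tau). set (a := length (I d)) in *.
  apply (Un_cv_le (fun n => sum_f_R0 g n ^ (d - a) * rpow0 (head_prod lam a) tau)).
  { apply CV_mult; [apply Un_cv_pow; auto|]. intros e He; exists 0%nat; intros.
    unfold R_dist; rewrite Rminus_diag, Rabs_R0; auto. }
  intros n.
  (* Free entries range over [0..n], antisymmetric entries are frozen at their ranks. *)
  set (ch := fun i => if in_dec Nat.eq_dec i (I d) then [count_below (I d) i] else seq 0 (S n)).
  set (ks := product_family ch 0 d).
  assert (Hks : forall k, In k ks -> in_nablaA d (I d) k).
  { intros k Hk. destruct (product_family_mem ch d 0 k Hk) as [Hkl Hkn].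
    apply in_nabla_of_ranks; auto. intros i Hi. specialize (Hkn i (Hr i Hi)). cbn in Hkn.
    unfold ch in Hkn. destruct (in_dec Nat.eq_dec i (I d)); [|contradiction].
    destruct Hkn as [E|[]]; auto. }
  assert (Hsum : lsum (map (fun k => rpow0 (lam_prod lam k) tau) ks) =
                 sum_f_R0 g n ^ (d - a) * rpow0 (head_prod lam a) tau).
  { transitivity (lsum (map (fun k => lprod (map g k)) ks)).
    { f_equal; apply map_ext; intros k. rewrite !lam_prod_eq, rpow0_lprod by (intros; apply Hlam).
      reflexivity. }
    unfold ks; rewrite product_family_sum.
    rewrite (map_ext _ (fun i => if in_dec Nat.eq_dec i (I d) then g (count_below (I d) i)
                                 else sum_f_R0 g n)).
    - rewrite prod_over_positions. fold a. rewrite Hc. unfold head_prod.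
      rewrite rpow0_lprod by (intros; apply Hlam). reflexivity.
    - intros i. unfold ch. destruct (in_dec Nat.eq_dec i (I d)).
      + unfold lsum; cbn; ring.
      + apply lsum_seq_sum. }
  rewrite <- Hsum. apply family_power_sum_bound; auto.
  apply product_family_nodup. intros j; unfold ch.
  destruct (in_dec Nat.eq_dec j (I d)); [repeat constructor; intros []|apply seq_NoDup].
Qed.

Lemma top_eig_rpow_frozen L tau d : 0 < L ->
  rpow0 (top_eig lam I d) tau
  = (rpow0 (lam 0%nat) tau / L) ^ (d - length (I d)) * frozen_sum L tau d.
Proof.
  intros HL. rewrite top_eig_rpow by auto. unfold frozen_sum, Rdiv.
  rewrite Rpow_mult_distr, pow_inv. field. apply pow_nonzero; lra.
Qed.

(* When at least half of the positions are free, [b >= d/2] turns [rho^b] into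
   [(sqrt rho)^d]. *)
Lemma top_eig_many_free L tau d : 0 < L -> rpow0 (lam 0%nat) tau <= L ->
  (d <= 2 * (d - length (I d)))%nat ->
  rpow0 (top_eig lam I d) tau <= sqrt (rpow0 (lam 0%nat) tau / L) ^ d * frozen_sum L tau d.
Proof.
  intros HL Hf0 Hfree. rewrite (top_eig_rpow_frozen L) by lra.
  set (rho := rpow0 (lam 0%nat) tau / L). set (b := (d - length (I d))%nat) in *.
  pose proof (rpow0_nonneg (lam 0%nat) tau).
  assert (Hrho : 0 <= rho <= 1).
  { unfold rho; split; [apply Rmult_le_pos; [lra|left; apply Rinv_0_lt_compat; lra]|].
    apply Rmult_le_reg_r with L; [lra|]. unfold Rdiv; rewrite Rmult_assoc, Rinv_l; lra. }
  apply Rmult_le_compat_r; [apply Rmult_le_pos; [apply pow_le; lra|apply rpow0_nonneg]|].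
  rewrite <- (sqrt_sqrt rho), Rpow_mult_distr, <- pow_add by lra.
  rewrite sqrt_sqrt by lra.
  apply pow_anti; [split; [apply sqrt_pos|rewrite <- sqrt_1; apply sqrt_le_1; lra]|lia].
Qed.

(* The frozen sums grow at most polynomially in [d]: [frozen_sum_bound] has the form
   [frozen_sum <= P (1 + rho^b frozen_sum)] with [P = c1 d^e1] and [rho < 1], while
   [rho^b frozen_sum = lambda_1^(b tau) (lambda_1...lambda_a)^tau <= E^b A], so
   [self_bound] applies. *)
Lemma frozen_sum_poly tau L : p / 2 < tau ->
  Un_cv (sum_f_R0 (fun m => rpow0 (lam m) tau)) L -> rpow0 (lam 0%nat) tau < L ->
  exists c e, 0 < c /\ 0 <= e /\
    forall d, (1 <= d)%nat -> frozen_sum L tau d <= c * Rpower (INR d) e.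
Proof.
  intros Htau HL HfL. pose proof Htr as [HC [Hp [Hq _]]].
  pose proof (exponent_gt1 tau Htau). pose proof (family_const_pos tau Htau) as Hc1.
  set (f0 := rpow0 (lam 0%nat) tau) in *.
  assert (Hf0 : 0 < f0).
  { apply rpow0_gt0. pose proof (eigen_antitone lam Hlam 0 1 ltac:(lia)); lra. }
  set (rho := f0 / L).
  assert (Hrho : 0 < rho < 1).
  { unfold rho; split; [apply Rdiv_lt_0_compat; lra|].
    apply Rmult_lt_reg_r with L; [lra|]. unfold Rdiv; rewrite Rmult_assoc, Rinv_l; lra. }
  destruct (top_eig_rpow_cap lam I tau Hlam ltac:(lra)) as [A [HA Hcap]].
  set (E := Rmax 1 f0) in Hcap. assert (HE : 1 <= E) by apply Rmax_l.
  set (e1 := q * (2 * tau / p)). assert (He1 : 0 <= e1) by (unfold e1; nra).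
  set (g := ln E / - ln rho).
  assert (Hg : 0 <= g).
  { assert (0 <= ln E) by (rewrite <- ln_1; apply ln_le; lra).
    pose proof (ln_lt_0 rho Hrho).
    unfold g; apply Rmult_le_pos; [lra|left; apply Rinv_0_lt_compat; lra]. }
  set (c1 := family_const tau) in *.
  exists (2 * c1 * (1 + A * Rpower (2 * c1) g)), (e1 * (1 + g)). split; [|split].
  - pose proof (Rpower_pos (2 * c1) g). apply Rmult_lt_0_compat; nra.
  - apply Rmult_le_pos; lra.
  - intros d Hd. set (b := (d - length (I d))%nat).
    assert (Hx : 1 <= INR d) by (apply (le_INR 1); auto).
    assert (Htop : rpow0 (top_eig lam I d) tau = rho ^ b * frozen_sum L tau d)
      by (apply top_eig_rpow_frozen; lra).
    eapply Rle_trans; [|apply self_bound_poly; auto].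
    apply (self_bound _ _ A rho E b); auto.
    + apply Rmult_le_pos; [apply pow_le; lra|apply rpow0_nonneg].
    + pose proof (Rpower_pos (INR d) e1). nra.
    + rewrite <- Htop. apply frozen_sum_bound; auto.
    + rewrite <- Htop. apply Hcap.
Qed.

(* The top eigenvalue decays exponentially up to a polynomial factor: with [tau = p],
   if at least half the positions are free then [top^p = rho^b frozen_sum] with
   [rho < 1]; otherwise [top_eig_many_antisym] applies. *)
Lemma top_eig_exp_decay : exists K th e, 0 <= K /\ 0 < th < 1 /\ 0 <= e /\
  forall d, (1 <= d)%nat -> rpow0 (top_eig lam I d) p <= K * th ^ d * Rpower (INR d) e.
Proof.
  pose proof Htr as [HC [Hp [Hq _]]]. assert (Htau : p / 2 < p) by lra.
  destruct (eigen_summable p Htau) as [L [HL HfL]].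
  destruct (frozen_sum_poly p L Htau HL HfL) as [c [e [Hc [He Hfrozen]]]].
  destruct (top_eig_many_antisym lam I Hlam) as [B [HB Hanti]].
  pose proof (rpow0_nonneg (lam 0%nat) p).
  set (r := sqrt (rpow0 (lam 0%nat) p / L)).
  assert (Hr : 0 <= r < 1).
  { split; [apply sqrt_pos|]. rewrite <- sqrt_1. apply sqrt_lt_1; [|lra|].
    - apply Rmult_le_pos; [lra|left; apply Rinv_0_lt_compat; lra].
    - apply Rmult_lt_reg_r with L; [lra|]. unfold Rdiv; rewrite Rmult_assoc, Rinv_l; lra. }
  set (h := rpow0 (/ 2) p).
  assert (Hh : 0 < h < 1).
  { unfold h; split; [apply rpow0_gt0; lra|]. rewrite <- (rpow0_1 p). apply rpow0_lt; lra. }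
  set (th := Rmax r h). set (K := Rmax c (rpow0 B p)).
  assert (Hth : r <= th /\ h <= th) by (split; [apply Rmax_l|apply Rmax_r]).
  assert (HK : c <= K /\ rpow0 B p <= K) by (split; [apply Rmax_l|apply Rmax_r]).
  exists K, th, e. split; [lra|]. split; [unfold th, Rmax; destruct (Rle_dec r h); lra|].
  split; auto. intros d Hd.
  assert (Hxe : 1 <= Rpower (INR d) e) by (apply Rpower_ge1; [apply (le_INR 1)|]; auto).
  pose proof (pow_le th d ltac:(lra)) as Hthd.
  replace (K * th ^ d * Rpower (INR d) e) with (th ^ d * (K * Rpower (INR d) e)) by ring.
  destruct (le_lt_dec d (2 * (d - length (I d)))) as [Hfree|Hanti'].
  - eapply Rle_trans; [apply (top_eig_many_free L); [lra|lra|exact Hfree]|]. fold r.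
    apply Rmult_le_compat; [apply pow_le; lra| | |].
    + apply Rmult_le_pos; [apply pow_le; lra|apply rpow0_nonneg].
    + apply pow_incr; lra.
    + eapply Rle_trans; [apply Hfrozen; auto|]. apply Rmult_le_compat_r; lra.
  - specialize (Hanti d ltac:(lia)).
    eapply Rle_trans; [apply rpow0_le; [lra|split; [apply top_eig_nonneg; auto|exact Hanti]]|].
    rewrite rpow0_mult, rpow0_pow by (try apply pow_le; lra). fold h.
    apply Rmult_le_compat; [apply pow_le; lra|apply rpow0_nonneg|apply pow_incr; lra|].
    nra.
Qed.

Lemma top_eig_times_poly_cv (P : list R) (mu : nat -> R) :
  (forall d, (1 <= d)%nat -> is_largest_eig lam I d (mu d)) ->
  Un_cv (fun d => mu d * poly_eval P (INR d)) 0.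
Proof.
  intros Hmu. pose proof Htr as [HC [Hp [Hq _]]].
  destruct top_eig_exp_decay as [K [th [e [HK [Hth [He Hdecay]]]]]].
  set (KP := lsum (map Rabs P)). set (np := length P).
  assert (HKP : 0 <= KP) by (apply lsum_nonneg; intros; apply Rabs_pos).
  intros eps Heps. pose proof (rpow0_nonneg KP p) as HKPp.
  destruct (geom_poly_decay (K * rpow0 KP p) th (e + p * INR np) (rpow0 eps p)
    ltac:(apply Rmult_le_pos; auto) Hth ltac:(pose proof (pos_INR np); nra)
    ltac:(apply rpow0_gt0; auto)) as [N HN].
  exists (Nat.max N 1). intros d Hd. assert (Hd1 : (1 <= d)%nat) by lia.
  destruct (Hmu d Hd1) as [[k0 [Hk0 <-]] _].
  pose proof (lam_prod_nonneg lam k0 (proj1 Hlam)) as Hmu0.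
  pose proof (lam_prod_le_top_eig I HI lam Hlam d k0 Hd1 Hk0) as Hmutop.
  assert (Hx : 1 <= INR d) by (apply (le_INR 1); auto).
  pose proof (poly_eval_bound P (INR d) Hx) as HPb. fold KP np in HPb.
  assert (Hxn : 0 <= INR d ^ np) by (apply pow_le; lra).
  (* [|mu_d P(d)| <= Y] and [Y^p] is eventually below [eps^p]. *)
  set (Y := top_eig lam I d * KP * INR d ^ np).
  assert (Hu : Rabs (lam_prod lam k0 * poly_eval P (INR d)) <= Y).
  { rewrite Rabs_mult, (Rabs_right (lam_prod lam k0)) by lra. unfold Y. rewrite Rmult_assoc.
    apply Rmult_le_compat; auto; apply Rabs_pos. }
  assert (HYp : rpow0 Y p <= K * rpow0 KP p * th ^ d * Rpower (INR d) (e + p * INR np)).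
  { pose proof (top_eig_nonneg lam I d Hlam).
    unfold Y. rewrite rpow0_mult, rpow0_mult
      by first [assumption|apply Rmult_le_pos; assumption].
    rewrite rpow0_pow, (rpow0_pos (INR d)) by lra.
    rewrite <- Rpower_pow by apply Rpower_pos. rewrite Rpower_mult, Rpower_plus.
    specialize (Hdecay d Hd1). pose proof (Rpower_pos (INR d) (p * INR np)).
    apply Rle_trans
      with (K * th ^ d * Rpower (INR d) e * rpow0 KP p * Rpower (INR d) (p * INR np));
      [|right; ring].
    apply Rmult_le_compat_r; [lra|]. apply Rmult_le_compat_r; auto. }
  specialize (HN d ltac:(lia) Hd1).
  assert (HYe : Y < eps).
  { destruct (Rlt_dec Y eps); auto. exfalso.
    assert (rpow0 eps p <= rpow0 Y p) by (apply rpow0_le; lra). lra. }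
  unfold R_dist. rewrite Rminus_0_r. lra.
Qed.

Hypothesis Hinit : forall d : nat, (1 <= d)%nat ->
  exists k, in_nablaA d (I d) k /\ 0 < lam_prod lam k.

(* The quantity of part (ii) is [d ln L - ln frozen_sum]: both sides equal
   [a ln L - sum_(t < a) ln lambda_t^tau], all eigenvalues involved being positive. *)
Lemma log_ratio_sum_eq L tau d : 0 < L -> (1 <= d)%nat ->
  fsum (length (I d)) (fun k => ln (L / rpow0 (lam k) tau))
  = INR d * ln L - ln (frozen_sum L tau d).
Proof.
  intros HL Hd. pose proof (length_index_set_le I HI d Hd) as Hale.
  set (a := length (I d)) in *.
  assert (Hpos : forall t, In t (seq 0 a) -> 0 < rpow0 (lam t) tau).
  { intros t Ht. apply in_seq in Ht.
    apply rpow0_gt0, (head_eigs_pos I HI lam Hlam d Hd); auto. lia. }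
  set (S := lsum (map (fun t => ln (rpow0 (lam t) tau)) (seq 0 a))).
  assert (Hfrozen : ln (frozen_sum L tau d) = INR (d - a) * ln L + S).
  { assert (Hh : rpow0 (head_prod lam a) tau = lprod (map (fun t => rpow0 (lam t) tau) (seq 0 a)))
      by (apply rpow0_lprod; intros; apply Hlam).
    unfold frozen_sum. fold a. rewrite Hh, ln_mult, ln_pow, ln_lprod; auto.
    - apply pow_lt; auto.
    - apply lprod_pos; auto. }
  change (lsum (map (fun k => ln (L / rpow0 (lam k) tau)) (seq 0 a))
          = INR d * ln L - ln (frozen_sum L tau d)).
  rewrite Hfrozen, minus_INR by lia.
  rewrite (map_ext_in _ (fun t => ln L - ln (rpow0 (lam t) tau))).
  - rewrite lsum_sub_const, length_seq. fold S. ring.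
  - intros t Ht. specialize (Hpos t Ht).
    unfold Rdiv. rewrite ln_mult, ln_Rinv; auto. apply Rinv_0_lt_compat; auto.
Qed.

(* Part (ii): [ln frozen_sum <= ln c + e ln d <= delta d] for large [d]. *)
Lemma log_mass_inequality tau : p / 2 < tau ->
  exists L : R,
    infinite_sum (fun m => rpow0 (lam m) tau) L /\
    forall delta : R, 0 < delta ->
      exists d0 : nat, (1 <= d0)%nat /\
        forall d : nat, (d0 <= d)%nat ->
          ln L - delta <= / INR d * fsum (length (I d)) (fun k => ln (L / rpow0 (lam k) tau)).
Proof.
  intros Htau. destruct (eigen_summable tau Htau) as [L [HL HfL]].
  exists L. split; [exact HL|].
  assert (HL0 : 0 < L) by (pose proof (rpow0_nonneg (lam 0%nat) tau); lra).
  destruct (frozen_sum_poly tau L Htau HL HfL) as [c [e [Hc [He Hfrozen]]]].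
  intros delta Hdelta. destruct (log_sublinear (ln c) e delta He Hdelta) as [N HN].
  exists (Nat.max N 1). split; [lia|]. intros d Hd. assert (Hd1 : (1 <= d)%nat) by lia.
  assert (Hx : 1 <= INR d) by (apply (le_INR 1); auto).
  assert (Hlog : ln (frozen_sum L tau d) <= ln c + e * ln (INR d)).
  { rewrite <- (ln_exp (e * ln (INR d))), <- ln_mult by (auto; apply exp_pos).
    apply ln_le; [|apply Hfrozen; auto].
    apply Rmult_lt_0_compat; [apply pow_lt; auto|]. apply rpow0_gt0.
    unfold head_prod. apply lprod_pos. intros t Ht. apply in_seq in Ht.
    apply (head_eigs_pos I HI lam Hlam d Hd1); auto. lia. }
  rewrite log_ratio_sum_eq by auto. specialize (HN d ltac:(lia) Hd1).
  apply Rmult_le_reg_l with (INR d); [lra|].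
  rewrite <- Rmult_assoc, Rinv_r, Rmult_1_l by lra. lra.
Qed.

(* If [a_d < M] for some [d], then the first [a_d] eigenvalues are positive, so
   [lambda_1 ... lambda_(a_d)] is at least the positive product of [min(lambda_t, 1)]
   over the positive [lambda_t], [t < M]. *)
Lemma head_prod_lower_bound M : exists m, 0 < m /\
  forall d, (1 <= d)%nat -> (length (I d) <= M)%nat -> m <= head_prod lam (length (I d)).
Proof.
  set (cap := fun t => if Rlt_dec 0 (lam t) then Rmin (lam t) 1 else 1).
  assert (Hcap : forall t, 0 < cap t <= 1).
  { intros t; unfold cap; destruct (Rlt_dec 0 (lam t)); [|lra].
    unfold Rmin; destruct (Rle_dec (lam t) 1); lra. }
  assert (Hcap01 : forall t, In t (seq 0 M) -> 0 <= cap t <= 1)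
    by (intros t _; specialize (Hcap t); lra).
  exists (lprod (map cap (seq 0 M))). split; [apply lprod_pos; intros; apply Hcap|].
  intros d Hd HaM. set (a := length (I d)) in *.
  pose proof (head_eigs_pos I HI lam Hlam d Hd (Hinit d Hd)) as Hpos. fold a in Hpos.
  unfold head_prod. replace M with (a + (M - a))%nat by lia.
  rewrite seq_app, map_app, lprod_app.
  assert (Hhead : lprod (map cap (seq 0 a)) <= lprod (map lam (seq 0 a))).
  { apply lprod_le. intros t Ht. apply in_seq in Ht. specialize (Hpos t ltac:(lia)).
    unfold cap. destruct (Rlt_dec 0 (lam t)); [|lra]. split; [|apply Rmin_l].
    unfold Rmin; destruct (Rle_dec (lam t) 1); lra. }
  assert (Htail : 0 <= lprod (map cap (seq (0 + a) (M - a))) <= 1).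
  { split; [apply lprod_nonneg|apply lprod_le1]; intros t _; specialize (Hcap t); lra. }
  assert (0 <= lprod (map cap (seq 0 a))) by (apply lprod_nonneg; intros t _; specialize (Hcap t); lra).
  nra.
Qed.

(* Part (iii): if [lambda_1 >= 1], then [top_eig d >= lambda_1 ... lambda_(a_d)], which is
   bounded below whenever [a_d < M]; by part (i) with the constant polynomial 1 this can
   only happen for finitely many [d]. *)
Lemma antisym_count_unbounded : 1 <= lam 0%nat ->
  forall M : nat, exists d0 : nat, forall d : nat, (d0 <= d)%nat -> (M <= length (I d))%nat.
Proof.
  intros Hge M. destruct (head_prod_lower_bound M) as [m [Hm Hlow]].
  pose proof (top_eig_times_poly_cv [1] (top_eig lam I)
     ltac:(intros; apply top_eig_largest; auto)) as Hcv.
  destruct (Hcv m Hm) as [N HN]. exists (Nat.max N 1). intros d Hd.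
  destruct (le_lt_dec M (length (I d))) as [|Ha]; auto. exfalso.
  specialize (HN d ltac:(lia)). unfold R_dist in HN. cbn in HN.
  rewrite Rmult_0_r, Rplus_0_r, Rmult_1_r, Rminus_0_r in HN.
  specialize (Hlow d ltac:(lia) ltac:(lia)).
  assert (Htop : head_prod lam (length (I d)) <= top_eig lam I d).
  { unfold top_eig.
    assert (1 <= lam 0%nat ^ (d - length (I d)))
      by (rewrite <- (pow1 (d - length (I d))); apply pow_incr; lra).
    pose proof (head_prod_nonneg lam (length (I d)) Hlam). nra. }
  rewrite Rabs_right in HN; lra.
Qed.

End Tractability.

Theorem proposition7 (lam : nat -> R) (I : nat -> list nat) (C p q : R)
  (Hlam : eigen_seq lam)
  (HI : valid_index_sets I)
  (Hlam2 : 0 < lam 1%nat)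
  (Hinit : forall d : nat, (1 <= d)%nat ->
     exists k, in_nablaA d (I d) k /\ 0 < lam_prod lam k)
  (Htract : poly_tractable_with lam I C p q) :
  (* (i) *)
  (forall (P : list R) (mu : nat -> R),
     (forall d : nat, (1 <= d)%nat -> 0 < poly_eval P (INR d)) ->
     (forall d : nat, (1 <= d)%nat -> is_largest_eig lam I d (mu d)) ->
     Un_cv (fun d => mu d * poly_eval P (INR d)) 0) /\
  (* (ii) *)
  (forall tau : R, p / 2 < tau ->
     exists L : R,
       infinite_sum (fun m => rpow0 (lam m) tau) L /\
       forall delta : R, 0 < delta ->
         exists d0 : nat, (1 <= d0)%nat /\
           forall d : nat, (d0 <= d)%nat ->
             ln L - delta <=
             / INR d * fsum (length (I d)) (fun k => ln (L / rpow0 (lam k) tau))) /\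
  (* (iii) *)
  (lam 0%nat < 1 \/
   forall M : nat, exists d0 : nat, forall d : nat, (d0 <= d)%nat ->
     (M <= length (I d))%nat).
Proof.
  split; [|split].
  - intros P mu _ Hmu. exact (top_eig_times_poly_cv lam I C p q Hlam HI Htract Hlam2 P mu Hmu).
  - exact (log_mass_inequality lam I C p q Hlam HI Htract Hlam2 Hinit).
  - destruct (Rlt_dec (lam 0%nat) 1) as [|Hge]; [left; auto|right].
    apply (antisym_count_unbounded lam I C p q Hlam HI Htract Hlam2 Hinit). lra.
Qed.
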